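(* Let $\bar k>0$ and, for each $k>\bar k$, let $(u_{1,k},u_{2,k})$ be an $L$-periodic solution of \[ \begin{cases}-u_1''=\mu_1(1-u_1)u_1-k\omega u_1u_2\\ -d u_2''=\mu_2(1-u_2)u_2-\alpha k\omega u_1u_2\end{cases} \] belonging to $O_\varepsilon$ (for a fixed $\varepsilon>0$). Let $\lambda_{1,k}$ be the periodic principal eigenvalue defined in the context. Then there exists $C\in\mathbb{R}$ such that $\lambda_{1,k}>-C$ for all $k>\bar k$.
   Context: Fix $L>0$, $\alpha>0$, $d>0$, positive $L$-periodic $\mu_1,\mu_2\in L^\infty(\mathbb{R})$ and a positive smooth $L$-periodic $\omega$. $v\in\mathscr{C}^{1,1}$ is a fixed $L$-periodic sign-changing solution of $-v''=\frac{\mu_1}{\alpha}(\alpha-v)v^+-\frac{\mu_2}{d^2}(d+v)v^-$, $X=\mathscr{C}^{0,1/2}_{L\text{-per}}$, $\eta>0$ fixed, and $O_\varepsilon=\{u\in X^2: u_1>0,\ u_2>0,\ \|\alpha u_1-du_2-v\|_{L^\infty}<\eta,\ \|u-(v^+/\alpha,v^-/d)\|_{X^2}<2\varepsilon\}$, where $z^+=\max(z,0)$, $z^-=-\min(z,0)$. $\lambda_{1,k}$ is the periodic principal eigenvalue of \[ -\begin{pmatrix}\frac{d^2}{dx^2}+\mu_1(1-2u_{1,k})-k\omega u_{2,k} & k\omega u_{1,k}\\ \alpha k\omega u_{2,k} & d\frac{d^2}{dx^2}+\mu_2(1-2u_{2,k})-\alpha k\omega u_{1,k}\end{pmatrix},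 \] i.e. the unique real $\lambda$ admitting an $L$-periodic eigenfunction $(\varphi,\psi)$ with $\varphi>0,\psi>0$ (the operator is cooperative). *)

From HB Require Import structures.
From mathcomp Require Import all_boot all_order all_algebra.
From mathcomp Require Import all_classical all_reals all_analysis.
Set Implicit Arguments. Unset Strict Implicit. Unset Printing Implicit Defensive.
Import Order.TTheory GRing.Theory Num.Theory.
Import numFieldNormedType.Exports.
Local Open Scope ring_scope.

Section Defs.
Variable R : realType.

Definition ppart (z : R) : R := Num.max z 0.
Definition npart (z : R) : R := Num.max (- z) 0.

Definition Lperiodic (L : R) (f : R -> R) : Prop := forall x, f (x + L) = f x.

(* essentially bounded measurable function (a representative of an L^oo class) *)
Definition Linfty (f : R -> R) : Prop :=
  measurable_fun setT f /\ exists M : R, forall x, `|f x| <= M.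

Definition smooth (f : R -> R) : Prop :=
  forall (n : nat) (x : R), derivable (iter n (fun g : R -> R => derive1 g) f) x 1.

Definition C11 (f : R -> R) : Prop :=
  (forall x, derivable f x 1) /\
  exists K : R, forall x y, `|derive1 f x - derive1 f y| <= K * `|x - y|.

(* strong (W^{2,oo}) solution of  f'' = g  a.e. : f in C^{1,1} and, for a.e. x,
   f' is differentiable at x with (f')'(x) = g x *)
Definition second_deriv_ae (f g : R -> R) : Prop :=
  C11 f /\
  {ae (@lebesgue_measure R), forall x, derivable (derive1 f) x 1 /\ derive1 (derive1 f) x = g x}.

Definition sup_norm_lt (f : R -> R) (r : R) : Prop :=
  exists c, c < r /\ forall x, `|f x| <= c.

Definition hoelder_bounds (f : R -> R) (a b : R) : Prop :=
  (forall x, `|f x| <= a) /\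
  (forall x y, `|f x - f y| <= b * Num.sqrt `|x - y|).

(* ||(f1,f2)||_{X^2} < r, with ||f||_X = ||f||_oo + [f]_{1/2} and
   ||(f1,f2)||_{X^2} = ||f1||_X + ||f2||_X *)
Definition X2_norm_lt (f1 f2 : R -> R) (r : R) : Prop :=
  exists a1 b1 a2 b2, a1 + b1 + a2 + b2 < r /\
    hoelder_bounds f1 a1 b1 /\ hoelder_bounds f2 a2 b2.

Definition inX (L : R) (f : R -> R) : Prop :=
  Lperiodic L f /\ exists a b, hoelder_bounds f a b.

Definition O_eps (L alpha d eta eps : R) (v : R -> R) (u1 u2 : R -> R) : Prop :=
  inX L u1 /\ inX L u2 /\
  (forall x, 0 < u1 x) /\ (forall x, 0 < u2 x) /\
  sup_norm_lt (fun x => alpha * u1 x - d * u2 x - v x) eta /\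
  X2_norm_lt (fun x => u1 x - ppart (v x) / alpha)
             (fun x => u2 x - npart (v x) / d) (2 * eps).

Definition is_system_solution (L alpha d k : R) (mu1 mu2 omega : R -> R)
    (u1 u2 : R -> R) : Prop :=
  Lperiodic L u1 /\ Lperiodic L u2 /\
  second_deriv_ae u1
    (fun x => - (mu1 x * (1 - u1 x) * u1 x - k * omega x * u1 x * u2 x)) /\
  second_deriv_ae u2
    (fun x => - (mu2 x * (1 - u2 x) * u2 x - alpha * k * omega x * u1 x * u2 x) / d).

(* lam is the periodic principal eigenvalue of
   - [[ d^2/dx^2 + mu1(1-2u1) - k om u2 ,  k om u1 ],
      [ alpha k om u2 , d d^2/dx^2 + mu2(1-2u2) - alpha k om u1 ]]
   i.e. lam admits an L-periodic eigenfunction (phi,psi) with phi>0, psi>0 *)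
Definition is_periodic_principal_eigenvalue (L alpha d k : R)
    (mu1 mu2 omega u1 u2 : R -> R) (lam : R) : Prop :=
  exists phi psi : R -> R,
    Lperiodic L phi /\ Lperiodic L psi /\
    (forall x, 0 < phi x) /\ (forall x, 0 < psi x) /\
    C11 phi /\ C11 psi /\
    {ae (@lebesgue_measure R), forall x,
       derivable (derive1 phi) x 1 /\ derivable (derive1 psi) x 1 /\
       - (derive1 (derive1 phi) x + (mu1 x * (1 - 2 * u1 x) - k * omega x * u2 x) * phi x
          + k * omega x * u1 x * psi x) = lam * phi x /\
       - (alpha * k * omega x * u2 x * phi x + d * derive1 (derive1 psi) x
          + (mu2 x * (1 - 2 * u2 x) - alpha * k * omega x * u1 x) * psi x)
         = lam * psi x}.

End Defs.

From HB Require Import structures.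
From mathcomp Require Import all_boot all_order all_algebra.
From mathcomp Require Import all_classical all_reals all_analysis.
From mathcomp Require Import ring lra measurable_realfun.
Set Implicit Arguments. Unset Strict Implicit. Unset Printing Implicit Defensive.
Import Order.TTheory GRing.Theory Num.Theory.
Import numFieldNormedType.Exports.
Local Open Scope ring_scope.
Local Open Scope classical_set_scope.

(** Write C for a bound of mu1 and mu2.  If lambda < -C, the combination
    w = alpha phi + d psi of the eigenfunctions satisfies w'' > 0 a.e.: the
    competition terms in k cancel and the remaining reaction terms are at
    most C (alpha phi + psi).  But w is L-periodic and C^{1,1}, so by Rolle w'
    vanishes at two points c < c'; being Lipschitz with a.e. nonnegative
    derivative, w' is nondecreasing, hence zero on [c, c'], which
    contradicts w'' > 0 a.e. there. *)

Lemma right_locally_nondecreasing (R : realType) (G : R -> R) :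
  (forall s, exists2 d, 0 < d & forall z, s < z < s + d -> G s <= G z) ->
  (forall s e, 0 < e -> exists2 r, 0 < r & forall y, s - r < y < s -> G y <= G s + e) ->
  {homo G : x y / x <= y}.
Proof.
move=> right_step left_usc a b ab.
pose S := [set x | a <= x <= b /\ G a <= G x].
have Sa : S a by rewrite /S /= lexx ab.
have supS : has_sup S by split; [exists a | exists b => x [/andP[]]].
pose s := sup S.
have le_as : a <= s := sup_upper_bound supS Sa.
have le_sb : s <= b by apply: ge_sup; [exists a | move=> x [/andP[]]].
have Gs : G a <= G s.
  apply/ler_addgt0Pr => e e0; have [r r0 Hr] := left_usc s e e0.
  have [x Sx rx] := sup_adherent r0 supS.
  have le_xs : x <= s := sup_upper_bound supS Sx.
  have [eq_xs|neq_xs] := eqVneq x s.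
    by rewrite -eq_xs; apply: ler_wpDr; [exact: ltW | exact: Sx.2].
  have lt_xs : x < s by rewrite lt_neqAle neq_xs le_xs.
  by apply: le_trans Sx.2 _; apply: Hr; rewrite lt_xs andbT; move: rx; rewrite -/s; lra.
have [lt_sb|le_bs] := ltP s b; last by have <- : s = b by apply/le_anti; rewrite le_sb le_bs.
have [d d0 Hd] := right_step s.
pose z := Num.min (s + d / 2) b.
have lt_sz : s < z by rewrite lt_min lt_sb andbT; lra.
have lt_zd : z < s + d by rewrite gt_min; apply/orP; left; lra.
have le_zb : z <= b by rewrite ge_min lexx orbT.
have Sz : S z.
  split; first by apply/andP; split; lra.
  by apply: le_trans Gs (Hd z _); rewrite lt_sz lt_zd.
by have := sup_upper_bound supS Sz; rewrite -/s; lra.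
Qed.

Lemma derivable_right_increment (R : realType) (h : R -> R) (s e : R) :
  derivable h s 1 -> 0 < e ->
  exists2 d, 0 < d & forall t, 0 < t < d -> (derive1 h s - e) * t <= h (s + t) - h s.
Proof.
move=> hd e0; rewrite derive1E /derive; set D := lim _.
move: hd => /cvgrPdist_lt /(_ e e0); rewrite near_withinE /= -/D.
move=> /nbhs_ballP[d d0 Hd]; exists d => // t /andP[t0 td].
have /Hd : ball 0 d t by rewrite /ball /= sub0r normrN gtr0_norm.
move=> /(_ (lt0r_neq0 t0)); rewrite /GRing.scale /= mulr1 (addrC t s) ltr_norml.
move=> /andP[_ lt_quot].
by rewrite -[h (s + t) - h s](divfK (lt0r_neq0 t0)) ler_pM2r //; lra.
Qed.

Section cumulative_measure.
Variables (R : realType) (U : set R).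
Hypotheses (mU : measurable U) (finU : (@lebesgue_measure R U < +oo)%E).

Definition cumulative_measure (x : R) : R :=
  fine (@lebesgue_measure R (U `&` `]-oo, x])).

Lemma cumulative_measureE x :
  @lebesgue_measure R (U `&` `]-oo, x]) = (cumulative_measure x)%:E.
Proof.
rewrite fineK // ge0_fin_numE ?measure_ge0 //; apply: le_lt_trans finU.
by apply: le_measure; rewrite ?inE //; apply: measurableI.
Qed.

Lemma cumulative_measure_ge0 x : 0 <= cumulative_measure x.
Proof. by rewrite fine_ge0 ?measure_ge0. Qed.

Lemma cumulative_measure_le x : ((cumulative_measure x)%:E <= @lebesgue_measure R U)%E.
Proof.
by rewrite -cumulative_measureE; apply: le_measure; rewrite ?inE //; apply: measurableI.
Qed.

Lemma cumulative_measure_nondecreasing : {homo cumulative_measure : x y / x <= y}.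
Proof.
move=> x y xy; rewrite -lee_fin -!cumulative_measureE.
apply: le_measure; rewrite ?inE; try exact: measurableI.
by apply: setIS => t /=; rewrite !in_itv /= => /le_trans->.
Qed.

Lemma cumulative_measure_itv s z : s < z -> `]s, z] `<=` U ->
  cumulative_measure s + (z - s) <= cumulative_measure z.
Proof.
move=> sz sU; rewrite -lee_fin EFinD -!cumulative_measureE.
have -> : (z - s)%:E = @lebesgue_measure R `]s, z].
  by rewrite lebesgue_measure_itv /= lte_fin sz EFinB.
rewrite -measureU //; first last.
- rewrite -subset0 => t [[_ /=]]; rewrite !in_itv /= => ts /andP[st _].
  by have := lt_le_trans st ts; rewrite ltxx.
- exact: measurableI.
apply: le_measure; rewrite ?inE; last 1 first.
- move=> t [[Ut /=]|/= st]; last by split; [exact: sU|move: st; rewrite /= !in_itv /= => /andP[]].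
  by rewrite in_itv /= => ts; split => //=; rewrite in_itv /= (le_trans ts) // ltW.
- by apply: measurableU => //; apply: measurableI.
- exact: measurableI.
Qed.

End cumulative_measure.

Lemma ae_open_cover (R : realType) (P : R -> Prop) (e : R) : 0 < e ->
  {ae @lebesgue_measure R, forall x, P x} ->
  exists U, [/\ open U, (@lebesgue_measure R U < e%:E)%E & forall x, ~ U x -> P x].
Proof.
move=> e0 [N [mN N0 notPN]].
have Nfin : (@lebesgue_measure R N < +oo)%E by rewrite N0 ltry.
have [U [oU NU UNe]] := lebesgue_regularity_outer mN Nfin e0.
exists U; split => //; last by move=> x Ux; apply: contrapT => /notPN /NU.
rewrite -(setDUK NU); apply: le_lt_trans (measureU2 _ _ _) _ => //.
  by apply: measurableD => //; exact: open_measurable.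
by rewrite (_ : _ N = 0%E) ?add0e.
Qed.

Lemma lipschitz_ae_derive_ge0_nondecreasing (R : realType) (h : R -> R) (K : R) :
  (forall x y, `|h x - h y| <= K * `|x - y|) ->
  {ae @lebesgue_measure R, forall x, derivable h x 1 /\ 0 <= derive1 h x} ->
  {homo h : x y / x <= y}.
Proof.
move=> hL hd a b ab.
have K0 : 0 <= K by have := hL 1 0; rewrite subr0 normr1 mulr1; exact: le_trans.
suff small e : 0 < e -> h a <= h b + e * (b - a + K).
  apply/ler_addgt0Pr => e e0; have c0 : 0 < b - a + K + 1 by lra.
  apply: le_trans (small _ (divr_gt0 e0 c0)) _; rewrite lerD2l.
  rewrite -[leRHS](divfK (lt0r_neq0 c0)) ler_wpM2l ?divr_ge0 ?ltW //; lra.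
move=> e0.
have [U [oU Ue hdU]] := ae_open_cover e0 hd.
have mU := open_measurable oU.
have finU : (@lebesgue_measure R U < +oo)%E by apply: lt_trans Ue _; rewrite ltry.
pose m := cumulative_measure U.
have m_ge0 x : 0 <= m x := cumulative_measure_ge0 U x.
have m_le x : m x <= e.
  by rewrite -lee_fin; apply/ltW/le_lt_trans/Ue; exact: cumulative_measure_le.
have m_mono x y : x <= y -> K * m x <= K * m y.
  by move=> xy; rewrite ler_wpM2l // cumulative_measure_nondecreasing.
have hL_lb x y : x <= y -> h x - K * (y - x) <= h y.
  move=> xy; have dxy : `|x - y| = y - x by rewrite distrC ger0_norm // subr_ge0.
  by have := hL x y; rewrite dxy ler_norml => /andP[_]; lra.
(* Inside [U], [m] grows at unit speed and absorbs the Lipschitz loss of [h];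
   outside [U], [h' >= 0] and the slack [e] do the job. *)
pose G y := h y + e * y + K * m y.
suff : {homo G : x y / x <= y}.
  by move=> /(_ a b ab); rewrite /G; have := m_ge0 a; have := m_le b; nra.
apply: right_locally_nondecreasing; last first.
  move=> s r r0; have K1 : 0 < K + 1 by lra.
  exists (r / (K + 1)); first exact: divr_gt0.
  move=> y /andP[sy ys]; have /(hL_lb y s) := ltW ys.
  have := m_mono y s (ltW ys).
  have : K * (s - y) <= r.
    apply: le_trans (_ : (K + 1) * (s - y) <= r).
      by rewrite ler_wpM2r ?subr_ge0 ?ltW //; lra.
    by rewrite mulrC -ler_pdivlMr //; lra.
  rewrite /G; nra.
move=> s; have [Us|notUs] := pselect (U s).
  have /nbhs_ballP[d d0 sdU] := oU s Us.
  exists d => // z /andP[sz zd].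
  have sU : `]s, z] `<=` U.
    move=> w /=; rewrite in_itv /= => /andP[sw wz]; apply: sdU.
    by rewrite /ball /= ltr_distlC; apply/andP; split; lra.
  have := cumulative_measure_itv mU finU sz sU; rewrite -/m => mz.
  have := hL_lb s z (ltW sz); rewrite /G.
  have : K * (m s + (z - s)) <= K * m z by rewrite ler_wpM2l.
  nra.
have [dh h'_ge0] := hdU s notUs.
have [d d0 Hd] := derivable_right_increment dh e0.
exists d => // z /andP[sz zd].
have t_in : 0 < z - s < d by apply/andP; split; lra.
have := Hd _ t_in; rewrite [s + _]addrC subrK.
have := m_mono s z (ltW sz); rewrite /G.
have : 0 <= derive1 h s * (z - s) by rewrite mulr_ge0 // subr_ge0 ltW.
nra.
Qed.

Lemma ae_itv_exists (R : realType) (P : R -> Prop) (a b : R) : a < b ->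
  {ae @lebesgue_measure R, forall x, P x} -> exists2 x, a < x < b & P x.
Proof.
move=> ab [N [mN N0 notPN]]; apply: contrapT => noP.
have abN : `]a, b[ `<=` N.
  move=> x; rewrite /= in_itv /= => xab; apply: notPN => Px; apply: noP; exists x => //.
have : (@lebesgue_measure R `]a, b[ <= @lebesgue_measure R N)%E by apply: le_measure; rewrite ?inE.
rewrite N0 lebesgue_measure_itv /= lte_fin ab -EFinB lee_fin; lra.
Qed.

Lemma is_derive_comb (R : realType) (f g : R -> R) (a b x : R) :
  derivable f x 1 -> derivable g x 1 ->
  is_derive x 1 (fun y => a * f y + b * g y) (a * derive1 f x + b * derive1 g x).
Proof.
by move=> /derivableP df /derivableP dg; rewrite !derive1E; apply: is_deriveD; apply: is_deriveZ.
Qed.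

Lemma derive1_comb (R : realType) (f g : R -> R) (a b : R) :
  (forall x, derivable f x 1) -> (forall x, derivable g x 1) ->
  derive1 (fun y => a * f y + b * g y) = (fun y => a * derive1 f y + b * derive1 g y).
Proof.
by move=> df dg; apply/funext => x; rewrite derive1E; apply: derive_val; exact: is_derive_comb.
Qed.

Lemma C11_comb (R : realType) (f g : R -> R) (a b : R) :
  C11 f -> C11 g -> C11 (fun y => a * f y + b * g y).
Proof.
move=> [df [Kf Lf]] [dg [Kg Lg]]; split.
  by move=> x; have Dx := is_derive_comb a b (df x) (dg x); exact: ex_derive.
exists (`|a| * Kf + `|b| * Kg) => x y; rewrite derive1_comb //.
set f' := derive1 f; set g' := derive1 g.
have -> : a * f' x + b * g' x - (a * f' y + b * g' y) = a * (f' x - f' y) + b * (g' x - g' y).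
  by ring.
apply: le_trans (ler_normD _ _) _; rewrite !normrM mulrDl -!mulrA.
by apply: lerD; apply: ler_wpM2l.
Qed.

Lemma periodic_C11_not_ae_strictly_convex (R : realType) (L : R) (g : R -> R) :
  0 < L -> Lperiodic L g -> C11 g ->
  ~ {ae @lebesgue_measure R, forall x, derivable (derive1 g) x 1 /\ 0 < derive1 (derive1 g) x}.
Proof.
move=> L0 gper [dg [K hL]] hae.
have mono : {homo derive1 g : x y / x <= y}.
  apply: lipschitz_ae_derive_ge0_nondecreasing hL _.
  by apply: (@filterS _ _ (ae_filter_ringOfSetsType _) _ _ _ hae) => x [? /ltW].
set h := derive1 g in mono *.
have zero_in_period a : exists2 c, a < c < a + L & h c = 0.
  have [||||c] := @Rolle R g a (a + L).
  - by rewrite ltrDl.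
  - by move=> x _; exact: dg.
  - by apply: derivable_within_continuous => x _; exact: dg.
  - by rewrite gper.
  by rewrite in_itv /= => ca g'c; exists c; rewrite // /h derive1E derive_val.
have [c /andP[_ lt_cL] hc] := zero_in_period 0.
have [c' /andP[lt_Lc' _] hc'] := zero_in_period L.
have lt_cc' : c < c' by lra.
have [x /andP[cx xc'] [_ h'x]] := ae_itv_exists lt_cc' hae.
suff : derive1 h x = 0 by move=> h'x0; rewrite h'x0 ltxx in h'x.
rewrite derive1E -(derive_cst 0 x 1); apply: near_eq_derive.
apply/nbhs_ballP; exists (Num.min (x - c) (c' - x)) => /=.
  by rewrite lt_min !subr_gt0 cx xc'.
move=> y; rewrite /ball /= lt_min !ltr_distlC => /andP[/andP[cy _] /andP[_ yc']].
by apply/le_anti; rewrite -{1}hc' -hc !mono //; lra.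
Qed.

Lemma periodic_principal_eigenvalue_ge (R : realType) (L alpha d k M : R)
    (mu1 mu2 omega u1 u2 : R -> R) (lam : R) :
  0 < L -> 0 < alpha -> 0 < d ->
  (forall x, 0 <= mu1 x <= M) -> (forall x, 0 <= mu2 x <= M) ->
  (forall x, 0 <= u1 x) -> (forall x, 0 <= u2 x) ->
  is_periodic_principal_eigenvalue L alpha d k mu1 mu2 omega u1 u2 lam -> - M <= lam.
Proof.
move=> L0 alpha0 d0 mu1M mu2M u1_ge0 u2_ge0.
move=> [phi [psi [phi_per [psi_per [phi_gt0 [psi_gt0 [Cphi [Cpsi eig]]]]]]]].
rewrite leNgt; apply/negP => lt_lamM.
pose w y := alpha * phi y + d * psi y.
apply: (@periodic_C11_not_ae_strictly_convex _ L w L0).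
- by move=> y; rewrite /w phi_per psi_per.
- exact: C11_comb.
have -> : derive1 w = fun y => alpha * derive1 phi y + d * derive1 psi y.
  exact: derive1_comb Cphi.1 Cpsi.1.
apply: (@filterS _ _ (ae_filter_ringOfSetsType _) _ _ _ eig).
move=> x [dphi' [dpsi' [eq_phi eq_psi]]].
have Dw' := is_derive_comb alpha d dphi' dpsi'.
split; first exact: ex_derive.
rewrite derive1E derive_val.
set phi'' := derive1 (derive1 phi) x in eq_phi *.
set psi'' := derive1 (derive1 psi) x in eq_psi *.
have w''E : alpha * phi'' + d * psi'' = - lam * (alpha * phi x + psi x)
    - alpha * (mu1 x * (1 - 2 * u1 x)) * phi x - mu2 x * (1 - 2 * u2 x) * psi x.
  have -> : phi'' = - (lam * phi x) - (mu1 x * (1 - 2 * u1 x) - k * omega x * u2 x) * phi x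
      - k * omega x * u1 x * psi x by rewrite -eq_phi; ring.
  have -> : d * psi'' = - (lam * psi x) - alpha * k * omega x * u2 x * phi x
      - (mu2 x * (1 - 2 * u2 x) - alpha * k * omega x * u1 x) * psi x by rewrite -eq_psi; ring.
  by ring.
rewrite w''E.
have reaction_le (m u : R) : 0 <= m <= M -> 0 <= u -> m * (1 - 2 * u) <= M.
  by move=> /andP[m_ge0 m_le] u_ge0; have := mulr_ge0 m_ge0 u_ge0; lra.
have := ler_wpM2r (ltW (mulr_gt0 alpha0 (phi_gt0 x))) (reaction_le _ _ (mu1M x) (u1_ge0 x)).
have := ler_wpM2r (ltW (psi_gt0 x)) (reaction_le _ _ (mu2M x) (u2_ge0 x)).
have : 0 < (- lam - M) * (alpha * phi x + psi x).
  by rewrite mulr_gt0 ?subr_gt0 ?addr_gt0 ?mulr_gt0 //; lra.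
lra.
Qed.

Theorem lemma3p8 (R : realType) (L alpha d eta eps kbar : R)
    (mu1 mu2 omega v : R -> R)
    (u1 u2 : R -> R -> R) (lam : R -> R) :
  0 < L -> 0 < alpha -> 0 < d -> 0 < eta -> 0 < eps -> 0 < kbar ->
  (* standing assumptions on mu1, mu2, omega *)
  Lperiodic L mu1 -> Lperiodic L mu2 -> Linfty mu1 -> Linfty mu2 ->
  (forall x, 0 < mu1 x) -> (forall x, 0 < mu2 x) ->
  Lperiodic L omega -> smooth omega -> (forall x, 0 < omega x) ->
  (* v : L-periodic sign-changing C^{1,1} solution of the limit problem *)
  Lperiodic L v -> C11 v -> (exists x, 0 < v x) -> (exists x, v x < 0) ->
  second_deriv_ae v (fun x => - (mu1 x / alpha * (alpha - v x) * ppart (v x)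
                                 - mu2 x / (d ^+ 2) * (d + v x) * npart (v x))) ->
  (* for each k > kbar, (u1 k, u2 k) is an L-periodic solution in O_eps *)
  (forall k, kbar < k ->
     is_system_solution L alpha d k mu1 mu2 omega (u1 k) (u2 k) /\
     O_eps L alpha d eta eps v (u1 k) (u2 k)) ->
  (* lam k is the periodic principal eigenvalue lambda_{1,k} *)
  (forall k, kbar < k ->
     is_periodic_principal_eigenvalue L alpha d k mu1 mu2 omega (u1 k) (u2 k) (lam k)) ->
  exists C : R, forall k, kbar < k -> - C < lam k.
Proof.
move=> L0 alpha0 d0 _ _ _ _ _ [_ [M1 mu1_le]] [_ [M2 mu2_le]] mu1_gt0 mu2_gt0.
move=> _ _ _ _ _ _ _ _ sol eig.
have M1_ge0 : 0 <= M1 := le_trans (normr_ge0 _) (mu1_le 0).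
have M2_ge0 : 0 <= M2 := le_trans (normr_ge0 _) (mu2_le 0).
have mu1M x : 0 <= mu1 x <= M1 + M2.
  by rewrite ltW //=; have := le_trans (ler_norm _) (mu1_le x); lra.
have mu2M x : 0 <= mu2 x <= M1 + M2.
  by rewrite ltW //=; have := le_trans (ler_norm _) (mu2_le x); lra.
exists (M1 + M2 + 1) => k lt_kbar_k.
have [_ [_ [u1_gt0 [u2_gt0 _]]]] := (sol k lt_kbar_k).2.
have := periodic_principal_eigenvalue_ge L0 alpha0 d0 mu1M mu2M
  (fun x => ltW (u1_gt0 x)) (fun x => ltW (u2_gt0 x)) (eig k lt_kbar_k).
lra.
Qed.
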